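(* Let $m\ge 2$ be an integer and let $n$ be a positive integer with $m^j\le n<m^{j+1}$ for some integer $j\ge 0$. Write the base $m$ representation of $n$ as $n=\alpha_j m^j+\alpha_{j-1}m^{j-1}+\cdots+\alpha_1 m+\alpha_0$ with $\alpha_j>0$ and $0\le \alpha_i\le m-1$ for $0\le i\le j$. Then there is a one-to-one correspondence between the set $\mathcal{B}_m(n)$ of $m$-ary partitions of $n$ and the set of integer sequences \[ \mathcal{S}_m(n)=\{(\beta_j,\beta_{j-1},\ldots,\beta_1)\,:\,0\le \beta_j\le \alpha_j \text{ and } 0\le \beta_t\le \alpha_t+m\beta_{t+1}\text{ for } 1\le t\le j-1\}. \]
   Context: An $m$-ary partition of a positive integer $n$ is a partition of $n$ in which every part is a power of $m$ (i.e. $1,m,m^2,\ldots$). Equivalently, it is a sequence $(a_\ell,a_{\ell-1},\ldots,a_0)$ of integers with $a_\ell>0$, $a_i\ge 0$ for $0\le i\le \ell-1$, and $n=a_\ell m^\ell+\cdots+a_1 m+a_0$ ($a_i$ being the number of parts equal to $m^i$). $\mathcal{B}_m(n)$ denotes the set of all $m$-ary partitions of $n$. *)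

From mathcomp Require Import all_boot.
Set Implicit Arguments. Unset Strict Implicit. Unset Printing Implicit Defensive.

(* An m-ary partition of n, encoded little-endian: a = [:: a_0; a_1; ...; a_l]
   where a_i is the number of parts equal to m^i; we require a_l > 0
   (so a is nonempty) and n = sum_i a_i m^i. *)
Definition mary_partition (m n : nat) (a : seq nat) : Prop :=
  0 < last 0 a /\ n = \sum_(i < size a) nth 0 a i * m ^ i.

Definition digit (m n i : nat) : nat := (n %/ m ^ i) %% m.

(* The set S_m(n): sequences (beta_j, ..., beta_1), encoded as
   b = [:: beta_1; ...; beta_j], i.e. beta_t = nth 0 b t.-1. *)
Definition beta (b : seq nat) (t : nat) : nat := nth 0 b t.-1.

Definition S_seq (m n j : nat) (b : seq nat) : Prop :=
  size b = j /\
  (0 < j -> beta b j <= digit m n j) /\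
  (forall t, 1 <= t <= j.-1 -> beta b t <= digit m n t + m * beta b t.+1).

(* The number beta_t of units of size m^t carried
   into position t by the parts smaller than m^t, that is
     beta_t = floor(n / m^t) - sum_(i >= t) a_i m^(i-t),
   satisfies
     a_t + beta_t = alpha_t + m * beta_(t+1),   beta_0 = 0,
   so that beta_j <= alpha_j and beta_t <= alpha_t + m beta_(t+1): the carries of
   a partition form a sequence of S_m(n).  Conversely a sequence of S_m(n) defines
   parts a_t = alpha_t + m beta_(t+1) - beta_t >= 0, and the carry equations
   telescope to sum_t a_t m^t = sum_t alpha_t m^t = n.  Each side of the carry
   equations determines the other, which gives the bijection. *)

From mathcomp Require Import all_boot zify.
From Stdlib Require Import ProofIrrelevance.

Set Implicit Arguments.
Unset Strict Implicit.
Unset Printing Implicit Defensive.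

Fixpoint trim_zeros (s : seq nat) : seq nat :=
  if s is x :: s' then
    if (trim_zeros s' == [::]) && (x == 0) then [::] else x :: trim_zeros s'
  else [::].

Lemma nth_trim_zeros s i : nth 0 (trim_zeros s) i = nth 0 s i.
Proof.
elim: s i => [|x s IH] i //=; case: ifP => [/andP[/eqP e /eqP ->]|_].
  by case: i => [|i] //=; rewrite -IH e nth_nil.
by case: i.
Qed.

Lemma last_trim_zeros s : trim_zeros s != [::] -> 0 < last 0 (trim_zeros s).
Proof.
elim: s => [|x s IH] //=; case: ifP => // /negbT.
case: (trim_zeros s) IH => [|y s'] IH /=; first by rewrite lt0n.
by move=> _ _; apply: IH.
Qed.

Lemma eq_from_nth0 s1 s2 :
  0 < last 0 s1 -> 0 < last 0 s2 -> nth 0 s1 =1 nth 0 s2 -> s1 = s2.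
Proof.
wlog le12 : s1 s2 / size s1 <= size s2.
  move=> W h1 h2 e; case: (leqP (size s1) (size s2)) => [le|/ltnW le].
    exact: W.
  by apply/esym/W => // i; rewrite e.
move=> h1 h2 e; apply: (eq_from_nth (x0 := 0)) => [|i _]; last exact: e.
apply/eqP; rewrite eqn_leq le12 leqNgt; apply/negP => lt12.
by move: h2; rewrite -nth_last -e nth_default //; lia.
Qed.

Section BaseValue.

Variable m : nat.

Definition value (s : seq nat) : nat := \sum_(i < size s) nth 0 s i * m ^ i.

Lemma value_nil : value [::] = 0.
Proof. by rewrite /value big_ord0. Qed.

Lemma value_cons x s : value (x :: s) = x + m * value s.
Proof.
rewrite /value /= big_ord_recl expn0 muln1 big_distrr /=; congr (_ + _).
by apply: eq_bigr => i _; rewrite expnS mulnCA.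
Qed.

Lemma value_cat s1 s2 : value (s1 ++ s2) = value s1 + m ^ size s1 * value s2.
Proof.
elim: s1 => [|x s IH]; first by rewrite value_nil expn0 mul1n.
by rewrite cat_cons !value_cons IH /= expnS mulnDr addnA mulnA.
Qed.

Lemma value_drop s t : value (drop t s) = nth 0 s t + m * value (drop t.+1 s).
Proof.
case: (ltnP t (size s)) => ht; first by rewrite (drop_nth 0 ht) value_cons.
by rewrite !drop_oversize ?nth_default ?value_nil ?muln0 // leqW.
Qed.

Lemma value_drop_leq s t : m ^ t * value (drop t s) <= value s.
Proof.
case: (leqP t (size s)) => ht.
  by rewrite -{2}(cat_take_drop t s) value_cat size_take_min (minn_idPl ht) leq_addl.
by rewrite drop_oversize ?value_nil ?muln0 // ltnW.
Qed.

Lemma value_widen s k : size s <= k -> value s = \sum_(i < k) nth 0 s i * m ^ i.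
Proof.
move=> le_sk; rewrite /value (big_ord_widen k (fun i => nth 0 s i * m ^ i) le_sk).
rewrite big_mkcond /=; apply: eq_bigr => i _.
by case: ltnP => // hi; rewrite nth_default.
Qed.

Lemma carry_telescope (x y c : nat -> nat) k :
  (forall t, t < k -> x t + c t = y t + m * c t.+1) ->
  \sum_(i < k) x i * m ^ i + c 0 = \sum_(i < k) y i * m ^ i + c k * m ^ k.
Proof.
elim: k => [|k IH] hk; first by rewrite !big_ord0 expn0 muln1.
rewrite !big_ord_recr /= addnAC IH => [|t ht]; last exact/hk/ltnW.
by rewrite -addnA -mulnDl [c k + _]addnC hk // mulnDl addnA expnS -mulnA mulnCA.
Qed.

End BaseValue.

Section Carries.

Variables m n : nat.
Hypothesis m_gt1 : 1 < m.

Let m_gt0 : 0 < m. Proof. exact: ltnW. Qed.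

Lemma digit_out t : n < m ^ t -> digit m n t = 0.
Proof. by move=> lt; rewrite /digit divn_small ?mod0n. Qed.

Lemma divn_exp_digit t : n %/ m ^ t = digit m n t + m * (n %/ m ^ t.+1).
Proof.
by rewrite /digit expnSr divnMA {1}(divn_eq (n %/ m ^ t) m) addnC mulnC.
Qed.

Lemma digit_sum k : n < m ^ k -> \sum_(i < k) digit m n i * m ^ i = n.
Proof.
move=> lt_nk; have := carry_telescope (x := fun=> 0) (y := digit m n)
  (c := fun t => n %/ m ^ t) (k := k) (fun t _ => divn_exp_digit t).
by rewrite big1 // expn0 divn1 divn_small // mul0n !addn0 => <-.
Qed.

(* [b] encodes (beta_1, ..., beta_j) as in [S_seq]; in [0 :: b] the index is t
   itself, with beta_0 = 0 and beta_t = 0 beyond the end of [b]. *)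
Definition carries (a b : seq nat) : Prop :=
  forall t, nth 0 a t + nth 0 (0 :: b) t = digit m n t + m * nth 0 (0 :: b) t.+1.

Lemma carries_sum a b k : carries a b ->
  \sum_(i < k) nth 0 a i * m ^ i =
  \sum_(i < k) digit m n i * m ^ i + nth 0 (0 :: b) k * m ^ k.
Proof. by move=> hab; rewrite -(carry_telescope (fun t _ => hab t)) addn0. Qed.

Lemma carries_value a b : carries a b -> value m a = n.
Proof.
move=> hab; set k := maxn (size a) (maxn (size b).+1 n).
have lt_nk : n < m ^ k.
  by apply: leq_trans (ltn_expl n m_gt1) _; rewrite leq_pexp2l // !leq_max leqnn !orbT.
rewrite (value_widen m (k := k)) ?leq_maxl // (carries_sum k hab) digit_sum //.
by rewrite [nth _ _ k]nth_default ?muln0 ?addn0 //=; lia.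
Qed.

Lemma carries_leq a b t :
  carries a b -> nth 0 (0 :: b) t <= digit m n t + m * nth 0 (0 :: b) t.+1.
Proof. by move=> hab; rewrite -hab leq_addl. Qed.

Lemma carries_inj_partition a1 a2 b : carries a1 b -> carries a2 b ->
  0 < last 0 a1 -> 0 < last 0 a2 -> a1 = a2.
Proof.
move=> h1 h2 l1 l2; apply: eq_from_nth0 => // t.
by apply/eqP; rewrite -(eqn_add2r (nth 0 (0 :: b) t)) h1 h2.
Qed.

Lemma carries_inj_carry a b1 b2 : carries a b1 -> carries a b2 ->
  size b1 = size b2 -> b1 = b2.
Proof.
move=> h1 h2 size12; apply: (eq_from_nth (x0 := 0)) => // t _.
have := carries_sum t.+1 h1; rewrite (carries_sum t.+1 h2) => /addnI /eqP.
by rewrite eqn_pmul2r ?expn_gt0 ?m_gt0 // => /eqP.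
Qed.

Definition carry (a : seq nat) (t : nat) : nat := n %/ m ^ t - value m (drop t a).

Lemma carry_eq a t : value m a = n ->
  nth 0 a t + carry a t = digit m n t + m * carry a t.+1.
Proof.
move=> val_a; have le_drop u : value m (drop u a) <= n %/ m ^ u.
  by rewrite leq_divRL ?expn_gt0 ?m_gt0 // -val_a mulnC value_drop_leq.
have := le_drop t; rewrite (divn_exp_digit t) (value_drop m a t) => le_t.
have le_mt1 := leq_mul (leqnn m) (le_drop t.+1).
by rewrite /carry (divn_exp_digit t) (value_drop m a t) mulnBr; lia.
Qed.

Definition carry_seq (j : nat) (a : seq nat) : seq nat := mkseq (fun t => carry a t.+1) j.

Lemma carries_carry_seq j a : n < m ^ j.+1 -> mary_partition m n a ->
  carries a (carry_seq j a).
Proof.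
move=> lt_nj [_ /esym val_a]; rewrite -/(value m a) in val_a.
have carryE t : nth 0 (0 :: carry_seq j a) t = carry a t.
  case: t => [|t] /=; first by rewrite /carry expn0 divn1 drop0 val_a subnn.
  case: (ltnP t j) => ht; first by rewrite nth_mkseq.
  rewrite nth_default ?size_mkseq // /carry divn_small //.
  exact: leq_trans lt_nj (leq_pexp2l m_gt0 _).
by move=> t; rewrite !carryE carry_eq.
Qed.

Lemma S_seqP j b : S_seq m n j b <->
  size b = j /\ forall t, nth 0 (0 :: b) t <= digit m n t + m * nth 0 (0 :: b) t.+1.
Proof.
split=> [[size_b [top mid]]|[size_b le_b]].
  split=> // -[|t] //=; case: (ltngtP t.+1 j) => ht.
  - by apply: mid; lia.
  - by rewrite nth_default // size_b -ltnS.
  - have nth_j : nth 0 b t.+1 = 0 by rewrite nth_default // size_b ht.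
    by move: top; rewrite -ht nth_j muln0 addn0; apply.
split=> //; split=> [j_gt0|[|t] // _]; last exact: le_b.
have := le_b j; rewrite /beta -{1}(prednK j_gt0) /=.
by rewrite [nth 0 b j]nth_default ?size_b // muln0 addn0.
Qed.

Definition parts_seq (j : nat) (b : seq nat) : seq nat :=
  trim_zeros (mkseq (fun t =>
    digit m n t + m * nth 0 (0 :: b) t.+1 - nth 0 (0 :: b) t) j.+1).

Lemma carries_parts_seq j b : n < m ^ j.+1 -> S_seq m n j b ->
  carries (parts_seq j b) b.
Proof.
move=> lt_nj /S_seqP[size_b le_b] t; rewrite nth_trim_zeros.
case: (ltnP t j.+1) => ht; first by rewrite nth_mkseq // subnK.
have lt_nt : n < m ^ t by apply: leq_trans lt_nj (leq_pexp2l m_gt0 ht).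
by rewrite digit_out // !nth_default ?size_mkseq ?muln0 //= size_b // ltnW.
Qed.

Lemma carry_seq_S_seq j a : n < m ^ j.+1 -> mary_partition m n a ->
  S_seq m n j (carry_seq j a).
Proof.
move=> lt_nj part_a; apply/S_seqP; split; first by rewrite size_mkseq.
by move=> t; apply: carries_leq; apply: carries_carry_seq.
Qed.

Lemma parts_seq_partition j b : 0 < n -> n < m ^ j.+1 -> S_seq m n j b ->
  mary_partition m n (parts_seq j b).
Proof.
move=> n_gt0 lt_nj hb; have hc := carries_parts_seq lt_nj hb.
split; last by rewrite -(carries_value hc).
apply: last_trim_zeros; apply/eqP => e.
by move: (carries_value hc); rewrite /parts_seq e value_nil; lia.
Qed.

End Carries.

Theorem theorem1p1 (m n j : nat) (hm : 2 <= m) (hn : 0 < n)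
  (hj : m ^ j <= n < m ^ j.+1) :
  exists f : {a : seq nat | mary_partition m n a} -> {b : seq nat | S_seq m n j b},
    bijective f.
Proof.
have {hj} lt_nj : n < m ^ j.+1 by case/andP: hj.
exists (fun a => exist _ _ (carry_seq_S_seq hm lt_nj (svalP a))).
exists (fun b => exist _ _ (parts_seq_partition hm hn lt_nj (svalP b))).
- move=> [a part_a]; apply: subset_eq_compat => /=.
  have S_b := carry_seq_S_seq hm lt_nj part_a.
  have [last_a _] := part_a; have [last_G _] := parts_seq_partition hm hn lt_nj S_b.
  exact: carries_inj_partition (carries_parts_seq hm lt_nj S_b)
                               (carries_carry_seq hm lt_nj part_a) last_G last_a.
- move=> [b S_b]; apply: subset_eq_compat => /=.
  have part_G := parts_seq_partition hm hn lt_nj S_b.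
  have size_b : size (carry_seq m n j (parts_seq m n j b)) = size b.
    by case: S_b => size_b _; rewrite size_mkseq size_b.
  exact: (carries_inj_carry hm (carries_carry_seq hm lt_nj part_G)
                               (carries_parts_seq hm lt_nj S_b) size_b).
Qed.
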